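(* Let $d\in\mathbb N$, $\varepsilon\in(0,1)$, and consider Thiémard's decomposition process of $[0,1)^d$ described in the context. Let $P$ be a box generated in the process that is decomposed via DECOMPOSE$(P,j)$ for some type $j\in\{1,\dots,d\}$, and assume $\delta^P W(P)>\varepsilon$. Then for every $i\in\{j,\dots,d\}$ the child $Q^P_i$ (of type $i$) is itself decomposed, and $$\delta^{Q_i^P}=\left(\frac{W(P)-\varepsilon/\delta^P}{W(P)-\varepsilon}\right)^{\frac{1}{d-i+1}}\delta^P .$$ Moreover, the right-hand side, viewed as the function $g(\delta,w,i)=\big(\frac{w-\varepsilon/\delta}{w-\varepsilon}\big)^{1/(d-i+1)}\delta$ on the domain $\delta\in(0,1)$, $w>\varepsilon/\delta$, $i\in\{1,\dots,d\}$, is strictly increasing in $\delta$, strictly increasing in $w$, and strictly decreasing in $i$.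
   Context: Fix $d\in\mathbb N$ and $\varepsilon\in(0,1]$. For $x,y\in[0,1]^d$ write $[x,y)=\prod_{i=1}^d[x_i,y_i)$ and define the weight $W([x,y))=\prod_{i=1}^d y_i-\prod_{i=1}^d x_i$. Thiémard's decomposition process generates boxes, each with a type in $\{1,\dots,d+1\}$. It starts with $I^d=[0,1)^d=[(0,\dots,0),(1,\dots,1))$, of type $1$. Whenever a generated box $P=[\alpha,\beta)$ has type $j\le d$ and $W(P)>\varepsilon$, it is decomposed (procedure DECOMPOSE$(P,j)$) as follows: put $$\delta^P=\left(\frac{\prod_{i=1}^d\beta_i-\varepsilon}{\prod_{i=1}^{j-1}\alpha_i\prod_{i=j}^d\beta_i}\right)^{1/(d-j+1)},\qquad \gamma^P_i=\alpha_i\ (i<j),\quad \gamma^P_i=\delta^P\beta_i\ (i\ge j).$$ The children of $P$ are the boxes $Q^P_k=[a^{(k)},b^{(k)})$ for $k=j,\dots,d$, where $a^{(k)}_i=\gamma^P_i$ for $i<k$, $a^{(k)}_i=\alpha_i$ for $i\ge k$, $b^{(k)}_k=\gamma^P_k$, $b^{(k)}_i=\beta_i$ for $i\neq k$; the box $Q^P_k$ has type $k$. In addition $P$ has the child $Q^P_{d+1}=[\gamma^P,\beta)$ of type $d+1$. A generated box of type $d+1$ or of weight at most $\varepsilon$ is not decomposed. (Known facts from Thiémard: $\delta^P\in(0,1)$; the process terminates after finitely many steps; $W(Q^P_{d+1})=\varepsilon$ and $W(Q^P_k)=\delta^PW(P)$ for $j\le k\le d$.) *)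

From HB Require Import structures.
From mathcomp Require Import all_boot all_order all_algebra.
From mathcomp Require Import reals exp.
Set Implicit Arguments. Unset Strict Implicit. Unset Printing Implicit Defensive.
Import Order.TTheory GRing.Theory Num.Theory.
Local Open Scope ring_scope.

(* Points of [0,1]^d are functions nat -> R; only coordinates 1..d are used
   (1-based indexing as in the paper).  A box [x,y) is the pair (x,y). *)
Definition point (R : realType) := nat -> R.
Definition box (R : realType) := (point R * point R)%type.

Section Thiemard.
Variables (R : realType) (d : nat) (eps : R).

Definition vol (x : point R) : R := \prod_(1 <= i < d.+1) x i.

Definition W (P : box R) : R := vol P.2 - vol P.1.

Definition delta (P : box R) (j : nat) : R :=
  ((vol P.2 - eps) /
     ((\prod_(1 <= i < j) P.1 i) * (\prod_(j <= i < d.+1) P.2 i)))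
  `^ (1 / (d.+1 - j)%:R).

Definition gamma (P : box R) (j : nat) : point R :=
  fun i => if (i < j)%N then P.1 i else delta P j * P.2 i.

Definition child (P : box R) (j k : nat) : box R :=
  if (k <= d)%N then
    ((fun i => if (i < k)%N then gamma P j i else P.1 i),
     (fun i => if i == k then gamma P j k else P.2 i))
  else (gamma P j, P.2).

Inductive generated : box R -> nat -> Prop :=
| gen_init : generated (fun _ => 0, fun _ => 1) 1
| gen_child : forall P j k, generated P j -> (j <= d)%N -> eps < W P ->
    (j <= k <= d.+1)%N -> generated (child P j k) k.

Definition decomposed (P : box R) (j : nat) : Prop :=
  [/\ generated P j, (1 <= j <= d)%N & eps < W P].

Definition g (dl w : R) (i : nat) : R :=
  ((w - eps / dl) / (w - eps)) `^ (1 / (d.+1 - i)%:R) * dl.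

End Thiemard.

(** Along the decomposition every box of type [j <= d] has the shape
    [alpha_i > 0] for [i < j], [alpha_i = 0] for [j <= i <= d] and [beta > 0], so
    [W(P)] is the volume of [beta] and [delta^P] is the [(d-j+1)]-th root of
    [(W(P) - eps) / (prod_{i<j} alpha_i prod_{i>=j} beta_i)].  The child [Q^P_i]
    arises from [P] by multiplying [beta_i] and [alpha_j, ..., alpha_{i-1}] by
    [delta^P]; hence [W(Q^P_i) = delta^P W(P) > eps] and, using the defining
    equation of [delta^P] to eliminate the product of the coordinates, the radicand of
    [delta^{Q^P_i}] is [(W(P) - eps/delta^P) / (W(P) - eps) * (delta^P)^(d-i+1)].
    The monotonicity of [g] follows from that of [x `^ p] for [p > 0], and in [i]
    from the fact that the base lies in [(0,1)]. *)
From HB Require Import structures.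
From mathcomp Require Import all_boot all_order all_algebra.
From mathcomp Require Import reals exp.
From mathcomp Require Import ring lra.
Import Order.TTheory GRing.Theory Num.Theory.
Local Open Scope ring_scope.
Set Implicit Arguments. Unset Strict Implicit.

Section RealFacts.
Variable R : realType.

Lemma prodr_nat_gt0 (m n : nat) (F : nat -> R) :
  (forall i, (m <= i < n)%N -> 0 < F i) -> 0 < \prod_(m <= i < n) F i.
Proof.
by move=> F_gt0; rewrite big_nat_cond; apply: prodr_gt0 => i /andP[/F_gt0].
Qed.

Lemma prodr_nat_eq0 (m n k : nat) (F : nat -> R) :
  (m <= k < n)%N -> F k = 0 -> \prod_(m <= i < n) F i = 0.
Proof.
move=> /andP[mk kn] Fk0; rewrite (big_cat_nat (n := k)) //=; last exact: ltnW.
by rewrite [X in _ * X]big_ltn // Fk0 mul0r mulr0.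
Qed.

Lemma prodr_nat_scale1 (m n k : nat) (F G : nat -> R) (c : R) :
  (m <= k < n)%N -> G k = c * F k -> (forall i, i != k -> G i = F i) ->
  \prod_(m <= i < n) G i = c * \prod_(m <= i < n) F i.
Proof.
move=> /andP[mk kn] Gk GF.
have kn' : (k <= n)%N by exact: ltnW.
rewrite !(big_cat_nat mk kn') /= !(big_ltn kn) Gk.
rewrite (eq_big_nat _ _ (F2 := F) (m := m)); last first.
  by move=> i /andP[_ ik]; rewrite GF // ltn_eqF.
rewrite (eq_big_nat _ _ (F2 := F) (m := k.+1)); last first.
  by move=> i /andP[ki _]; rewrite GF // gtn_eqF.
by rewrite -!mulrA mulrCA.
Qed.

Lemma powR_root_mulrX (x y : R) (m : nat) : 0 <= x -> 0 <= y -> (0 < m)%N ->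
  (x * y ^+ m) `^ (1 / m%:R) = x `^ (1 / m%:R) * y.
Proof.
move=> x_ge0 y_ge0 m_gt0; rewrite powRM ?exprn_ge0 //; congr (_ * _).
rewrite -powR_mulrn // -powRrM mul1r mulfV ?powRr1 //.
by rewrite pnatr_eq0 -lt0n.
Qed.

Lemma powR_rootK (c : R) (m : nat) : 0 <= c -> (0 < m)%N ->
  (c `^ (1 / m%:R)) ^+ m = c.
Proof.
move=> c_ge0 m_gt0; rewrite -powR_mulrn ?powR_ge0 // -powRrM mul1r mulVf.
  by rewrite powRr1.
by rewrite pnatr_eq0 -lt0n.
Qed.

Lemma rescaled_ratio (V e x A B C : R) (m n : nat) :
  x != 0 -> V - e != 0 -> x ^+ (m + n) * (A * (B * C)) = V - e ->
  (x * V - e) / (A * (x ^+ n * B) * (x * C)) = (V - e / x) / (V - e) * x ^+ m.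
Proof.
move=> x_neq0 Ve_neq0 ABC.
have xm_neq0 : x ^+ m != 0 by rewrite expf_neq0.
have -> : A * (x ^+ n * B) * (x * C) = x ^+ (m + n) * (A * (B * C)) * x / x ^+ m.
  by rewrite exprD; field.
by rewrite ABC; field; rewrite x_neq0 Ve_neq0 xm_neq0.
Qed.

End RealFacts.

Section Decomposition.
Variables (R : realType) (d : nat) (eps : R).

Definition typed_box (P : box R) (j : nat) : Prop :=
  [/\ forall i, (1 <= i < j)%N -> 0 < P.1 i,
      forall i, (j <= i <= d)%N -> P.1 i = 0 &
      forall i, (1 <= i <= d)%N -> 0 < P.2 i].

Definition delta_den (P : box R) (j : nat) : R :=
  (\prod_(1 <= i < j) P.1 i) * (\prod_(j <= i < d.+1) P.2 i).

Lemma W_typed_box P j : (1 <= j <= d)%N -> typed_box P j -> W d P = vol d P.2.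
Proof.
move=> /andP[j_ge1 j_le] [_ lo0 _].
rewrite /W; suff -> : vol d P.1 = 0 by rewrite subr0.
by apply: (@prodr_nat_eq0 _ 1 d.+1 j); rewrite ?j_ge1 ?lo0 ?leqnn.
Qed.

Lemma delta_den_gt0 P j : (1 <= j <= d)%N -> typed_box P j -> 0 < delta_den P j.
Proof.
move=> /andP[j_ge1 _] [lo_gt0 _ hi_gt0].
apply: mulr_gt0; apply: prodr_nat_gt0 => i; first exact: lo_gt0.
by move=> /andP[ji id]; rewrite hi_gt0 // (leq_trans j_ge1 ji).
Qed.

Lemma delta_gt0 P j : (1 <= j <= d)%N -> typed_box P j -> eps < W d P ->
  0 < delta d eps P j.
Proof.
move=> jd PT epsW; apply/powR_gt0/divr_gt0; last exact: delta_den_gt0.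
by rewrite subr_gt0 -(W_typed_box jd PT).
Qed.

Lemma delta_exprE P j : (1 <= j <= d)%N -> typed_box P j -> eps < W d P ->
  delta d eps P j ^+ (d.+1 - j) * delta_den P j = vol d P.2 - eps.
Proof.
move=> jd PT epsW; have den_gt0 := delta_den_gt0 jd PT.
rewrite powR_rootK ?subn_gt0 ?ltnS; last by case/andP: jd.
  by rewrite divfK // gt_eqF.
apply: divr_ge0; last exact: ltW.
by rewrite subr_ge0 -(W_typed_box jd PT) ltW.
Qed.

Section Child.
Variables (P : box R) (j k : nat).
Hypotheses (j_ge1 : (1 <= j)%N) (jk : (j <= k)%N) (kd : (k <= d)%N).
Let dl := delta d eps P j.

Lemma child_snd_scale (m n : nat) : (m <= k < n)%N ->
  \prod_(m <= i < n) (child d eps P j k).2 i = dl * \prod_(m <= i < n) P.2 i.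
Proof.
move=> mkn; apply: (prodr_nat_scale1 mkn) => [|i ik].
  by rewrite /child kd /= eqxx /gamma ltnNge jk.
by rewrite /child kd /= (negbTE ik).
Qed.

Lemma child_fst_prod :
  \prod_(1 <= i < k) (child d eps P j k).1 i =
  \prod_(1 <= i < j) P.1 i * (dl ^+ (k - j) * \prod_(j <= i < k) P.2 i).
Proof.
rewrite (big_cat_nat (n := j)) //=; congr (_ * _).
  by apply: eq_big_nat => i /andP[_ ij]; rewrite /child kd /= /gamma
    (leq_trans ij jk) ij.
rewrite -prodr_const_nat -big_split /=.
by apply: eq_big_nat => i /andP[ji ik]; rewrite /child kd /= /gamma ik ltnNge ji.
Qed.

Hypotheses (PT : typed_box P j) (epsW : eps < W d P).

Let jd : (1 <= j <= d)%N. Proof. by rewrite j_ge1 (leq_trans jk kd). Qed.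
Let dl_gt0 : 0 < dl. Proof. exact: delta_gt0 jd PT epsW. Qed.

Lemma child_typed_box : typed_box (child d eps P j k) k.
Proof.
case: PT => lo_gt0 lo0 hi_gt0; rewrite /child kd /gamma; split => i /= /andP[].
- move=> i_ge1 ik; rewrite ik; case: ifP => ij; first by rewrite lo_gt0 ?i_ge1.
  by rewrite mulr_gt0 // hi_gt0 // i_ge1 (leq_trans (ltnW ik) kd).
- by move=> ki id; rewrite ltnNge ki lo0 // id (leq_trans jk ki).
- move=> i_ge1 id; case: eqP => _; last by rewrite hi_gt0 ?i_ge1.
  by rewrite ltnNge jk mulr_gt0 // hi_gt0 // kd (leq_trans j_ge1 jk).
Qed.

Lemma W_child : W d (child d eps P j k) = dl * W d P.
Proof.
have kd' : (1 <= k <= d)%N by rewrite (leq_trans j_ge1 jk) kd.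
rewrite (W_typed_box kd' child_typed_box) (W_typed_box jd PT).
by apply: child_snd_scale; rewrite (leq_trans j_ge1 jk).
Qed.

Lemma delta_child : eps < dl * W d P ->
  delta d eps (child d eps P j k) k =
  ((W d P - eps / dl) / (W d P - eps)) `^ (1 / (d.+1 - k)%:R) * dl.
Proof.
have exprE := delta_exprE jd PT epsW.
have epsV : eps < vol d P.2 by rewrite -(W_typed_box jd PT).
move=> eps_lt; rewrite (W_typed_box jd PT) in eps_lt *.
set V := vol d P.2 in epsV eps_lt exprE *.
have split_tail : \prod_(j <= i < d.+1) P.2 i =
    \prod_(j <= i < k) P.2 i * \prod_(k <= i < d.+1) P.2 i.
  by rewrite (big_cat_nat jk (leqW kd)).
have sub_split : (d.+1 - j = (d.+1 - k) + (k - j))%N.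
  by rewrite addnBA // subnK // leqW.
rewrite /delta_den split_tail sub_split in exprE.
have vol_child : vol d (child d eps P j k).2 = dl * V.
  by apply: child_snd_scale; rewrite (leq_trans j_ge1 jk).
rewrite /delta vol_child (child_snd_scale (m := k)) ?leqnn // child_fst_prod.
rewrite (rescaled_ratio _ _ exprE) ?gt_eqF ?subr_gt0 //.
rewrite powR_root_mulrX ?subn_gt0 ?ltW //.
by apply: divr_gt0; rewrite subr_gt0 // ltr_pdivrMr // mulrC.
Qed.

End Child.

Lemma generated_typed_box P j : generated d eps P j ->
  (1 <= j)%N /\ ((j <= d)%N -> typed_box P j).
Proof.
elim=> [|Q i k _ [i_ge1 QT] id epsW /andP[ik _]].
  by split=> // _; split=> //= -[|[|]].
split=> [|kd]; first exact: leq_trans ik.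
exact: child_typed_box i_ge1 ik kd (QT id) epsW.
Qed.

Lemma child_decomposed_delta P j k : decomposed d eps P j ->
  eps < delta d eps P j * W d P -> (j <= k <= d)%N ->
  decomposed d eps (child d eps P j k) k /\
  delta d eps (child d eps P j k) k =
    ((W d P - eps / delta d eps P j) / (W d P - eps))
      `^ (1 / (d.+1 - k)%:R) * delta d eps P j.
Proof.
move=> [Pgen /andP[j_ge1 jd] epsW] eps_lt /andP[jk kd].
have PT := (generated_typed_box Pgen).2 jd.
split; last exact: delta_child.
split; first by apply: gen_child; rewrite ?jk ?(leq_trans kd).
- by rewrite (leq_trans j_ge1 jk).
- by rewrite W_child.
Qed.

End Decomposition.

Section Monotonicity.
Variables (R : realType) (d : nat) (eps : R).
Hypothesis eps_gt0 : 0 < eps.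

Lemma eps_lt_div (dl : R) : 0 < dl < 1 -> eps < eps / dl.
Proof. by move=> /andP[dl_gt0 dl_lt1]; rewrite ltr_pdivlMr // gtr_pMr. Qed.

Lemma g_base_bounds (dl w : R) : 0 < dl < 1 -> eps / dl < w ->
  0 < (w - eps / dl) / (w - eps) < 1.
Proof.
move=> dl01 w_gt; have eps_lt := eps_lt_div dl01.
have w_eps : 0 < w - eps by rewrite subr_gt0 (lt_trans eps_lt).
apply/andP; split; first by apply: divr_gt0 => //; rewrite subr_gt0.
by rewrite ltr_pdivrMr // mul1r ltrD2l ltrN2.
Qed.

Lemma root_exponent_gt0 (i : nat) : (i <= d)%N -> 0 < 1 / (d.+1 - i)%:R :> R.
Proof. by move=> id; rewrite divr_gt0 // ltr0n subn_gt0. Qed.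

Lemma g_incr_delta (dl1 dl2 w : R) (i : nat) :
  0 < dl1 -> dl1 < dl2 -> dl2 < 1 -> eps / dl1 < w -> (i <= d)%N ->
  g d eps dl1 w i < g d eps dl2 w i.
Proof.
move=> dl1_gt0 dl12 dl2_lt1 w_gt id.
have dl2_gt0 : 0 < dl2 by apply: lt_trans dl12.
have dl1_01 : 0 < dl1 < 1 by rewrite dl1_gt0 (lt_trans dl12 dl2_lt1).
have /andP[base1_gt0 _] := g_base_bounds dl1_01 w_gt.
have base12 : (w - eps / dl1) / (w - eps) < (w - eps / dl2) / (w - eps).
  rewrite ltr_pM2r ?ltrD2l ?ltrN2 ?ltr_pM2l ?ltf_pV2 // invr_gt0 subr_gt0.
  by rewrite (lt_trans (eps_lt_div dl1_01)).
have := gt0_ltr_powR (root_exponent_gt0 id) (ltW base1_gt0)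
  (ltW (lt_trans base1_gt0 base12)) base12.
have := powR_gt0 (1 / (d.+1 - i)%:R) base1_gt0.
rewrite /g; set p1 := _ `^ _; set p2 := _ `^ _ => p1_gt0 p12.
nra.
Qed.

Lemma g_incr_weight (dl w1 w2 : R) (i : nat) :
  0 < dl < 1 -> eps / dl < w1 -> w1 < w2 -> (i <= d)%N ->
  g d eps dl w1 i < g d eps dl w2 i.
Proof.
move=> dl01 w1_gt w12 id.
have eps_lt := eps_lt_div dl01.
have w1_eps : 0 < w1 - eps by rewrite subr_gt0 (lt_trans eps_lt).
have w2_eps : 0 < w2 - eps by rewrite subr_gt0 (lt_trans eps_lt) ?(lt_trans w1_gt).
have /andP[base1_gt0 _] := g_base_bounds dl01 w1_gt.
(* [(w - a) / (w - eps)] increases in [w] because [eps < a]. *)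
have base12 : (w1 - eps / dl) / (w1 - eps) < (w2 - eps / dl) / (w2 - eps).
  rewrite ltr_pdivrMr // mulrAC ltr_pdivlMr //.
  set a := eps / dl in eps_lt w1_gt *; nra.
have pow12 := gt0_ltr_powR (root_exponent_gt0 id) (ltW base1_gt0)
  (ltW (lt_trans base1_gt0 base12)) base12.
by rewrite /g ltr_pM2r //; case/andP: dl01.
Qed.

Lemma g_decr_type (dl w : R) (i1 i2 : nat) :
  0 < dl < 1 -> eps / dl < w -> (i1 < i2)%N -> (i2 <= d)%N ->
  g d eps dl w i2 < g d eps dl w i1.
Proof.
move=> dl01 w_gt i12 i2d.
have /andP[base_gt0 base_lt1] := g_base_bounds dl01 w_gt.
have i1d : (i1 <= d)%N by exact: leq_trans (ltnW i12) i2d.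
rewrite /g ltr_pM2r; last by case/andP: dl01.
rewrite /powR gt_eqF // ltr_expR ltr_nM2r ?ln_lt0 ?base_gt0 //.
rewrite !div1r ltf_pV2 ?posrE ?ltr0n ?subn_gt0 ?ltnS //.
by rewrite ltr_nat ltn_sub2l // ltnS.
Qed.

End Monotonicity.

Theorem mainTheorem1 (R : realType) (d : nat) (eps : R) :
  0 < eps < 1 ->
  (forall (P : box R) (j : nat),
     decomposed d eps P j ->
     eps < delta d eps P j * W d P ->
     forall i : nat, (j <= i <= d)%N ->
       decomposed d eps (child d eps P j i) i /\
       delta d eps (child d eps P j i) i =
         ((W d P - eps / delta d eps P j) / (W d P - eps))
           `^ (1 / (d.+1 - i)%:R) * delta d eps P j)
  /\
  (forall (dl1 dl2 w : R) (i : nat),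
     0 < dl1 -> dl1 < dl2 -> dl2 < 1 -> eps / dl1 < w -> (1 <= i <= d)%N ->
     g d eps dl1 w i < g d eps dl2 w i)
  /\
  (forall (dl w1 w2 : R) (i : nat),
     0 < dl < 1 -> eps / dl < w1 -> w1 < w2 -> (1 <= i <= d)%N ->
     g d eps dl w1 i < g d eps dl w2 i)
  /\
  (forall (dl w : R) (i1 i2 : nat),
     0 < dl < 1 -> eps / dl < w -> (1 <= i1)%N -> (i1 < i2)%N -> (i2 <= d)%N ->
     g d eps dl w i2 < g d eps dl w i1).
Proof.
move=> /andP[eps_gt0 _].
split; first by move=> P j *; exact: child_decomposed_delta.
split; first by move=> dl1 dl2 w i ? ? ? ? /andP[_]; exact: g_incr_delta.
split; first by move=> dl w1 w2 i ? ? ? /andP[_]; exact: g_incr_weight.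
by move=> dl w i1 i2 ? ? _; exact: g_decr_type.
Qed.
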